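(* Let $k\ge 2$, let $H_0$ be a finite $k$-uniform hypergraph and let $(H_t)_{t\ge0}$ be the ILTH hypergraphs generated from $H_0$. The number of hypertriangles in $H_t$ is $\Theta\left(\left((k-1)^3+3(k-1)\right)^t\right)$.
   Context: A $k$-uniform hypergraph has every hyperedge a $k$-element subset of the vertex set. The ILTH process: given $H_t$, form $H_{t+1}$ by adding for each vertex $x\in V(H_t)$ a new vertex $x'$ (its clone), and taking $E(H_{t+1})=E(H_t)\cup\{(e\setminus\{x\})\cup\{x'\} : e\in E(H_t),\ x\in e\}$. A hypertriangle is a 6-tuple $(u,e_1,v,e_2,w,e_3)$ with $u,v,w$ distinct vertices, $e_1,e_2,e_3$ distinct hyperedges, $u,v\in e_1$, $v,w\in e_2$, $w,u\in e_3$. Asymptotics are as $t\to\infty$ with $k$ and $H_0$ fixed. *)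

From mathcomp Require Import all_boot.
From Stdlib Require Import Rdefinitions Raxioms RIneq.
Local Open Scope nat_scope.

Set Implicit Arguments.
Unset Strict Implicit.
Unset Printing Implicit Defensive.

Record hgraph := HGraph { hvert : finType ; hedges : {set {set hvert}} }.

Definition uniform (k : nat) (H : hgraph) : Prop :=
  forall e, e \in hedges H -> #|e| = k.

(* One ILTH step.  The vertex set of H_{t+1} is V(H_t) * bool:
   (x, false) is the old vertex x, (x, true) is its clone x'. *)
Definition ilth_edges (T : finType) (E : {set {set T}}) : {set {set (T * bool)%type}} :=
  [set [set (y, false) | y in e] | e : {set T} in E] :|:
  [set [set (y, false) | y in e :\ x] :|: [set (x, true)] | e : {set T} in E, x : T in e].

Definition ilth_step (H : hgraph) : hgraph :=
  @HGraph (hvert H * bool)%type (@ilth_edges (hvert H) (hedges H)).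

Fixpoint ilth (H0 : hgraph) (t : nat) : hgraph :=
  match t with
  | 0 => H0
  | t'.+1 => ilth_step (ilth H0 t')
  end.

Definition is_hypertriangle (H : hgraph)
  (u : hvert H) (e1 : {set hvert H}) (v : hvert H) (e2 : {set hvert H})
  (w : hvert H) (e3 : {set hvert H}) : bool :=
  [&& u != v, v != w, w != u,
      e1 \in hedges H, e2 \in hedges H, e3 \in hedges H,
      e1 != e2, e2 != e3, e3 != e1,
      (u \in e1) && (v \in e1), (v \in e2) && (w \in e2) & (w \in e3) && (u \in e3)].

Definition num_hypertriangles (H : hgraph) : nat :=
  #|[set p : (hvert H * {set hvert H} * hvert H * {set hvert H} * hvert H * {set hvert H})%type
     | is_hypertriangle p.1.1.1.1.1 p.1.1.1.1.2 p.1.1.1.2 p.1.1.2 p.1.2 p.2]|.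

Definition big_Theta (f g : nat -> R) : Prop :=
  exists c1 c2 : R, exists N : nat,
    (0 < c1)%R /\ (0 < c2)%R /\
    forall t : nat, (N <= t)%nat ->
      (c1 * g t <= f t)%R /\ (f t <= c2 * g t)%R.

From mathcomp Require Import all_boot.
From Stdlib Require Import Reals.
From mathcomp Require Import zify.
From Stdlib Require Import Lra.

(* Call a closed walk a tuple (u, e1, v, e2, w, e3) satisfying every condition
   of a hypertriangle except that the three edges need not be distinct.
   Every edge of H_{t+1} is the lift of a unique edge e of H_t by a unique
   choice: keep e, or replace one x in e by its clone.  Forgetting the clone
   marks maps the closed walks of H_{t+1} to those of H_t, and the lifts of a
   fixed closed walk are the choices (c1, c2, c3) marking each of u, v, w
   consistently in both of its edges: either no vertex of the walk is cloned
   ((k-1)^3 ways) or exactly one of them is (k-1 ways each).  So the number of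
   closed walks is multiplied by exactly (k-1)^3 + 3(k-1) at each step, which
   bounds the hypertriangles from above; conversely every lift of a
   hypertriangle is a hypertriangle, so once some H_t0 has a hypertriangle their
   number is multiplied by at least that factor at each step. *)

Set Implicit Arguments.
Unset Strict Implicit.
Unset Printing Implicit Defensive.

Lemma card_sum_indicator (T : finType) (A : {pred T}) : #|A| = \sum_x (x \in A).
Proof. by rewrite -sum1_card big_mkcond; apply: eq_bigr => x _; case: (x \in A). Qed.

Lemma card_uniform_fibers (aT rT : finType) (f : aT -> rT) (A : {set aT}) (B : {set rT}) n :
  {in A, forall a, f a \in B} -> {in B, forall b, #|[set a in A | f a == b]| = n} ->
  #|A| = #|B| * n.
Proof.
move=> fAB fibers; rewrite -sum1_card (partition_big f (mem B)) //= -sum_nat_const.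
apply: eq_bigr => b bB; rewrite -(fibers b bB) -sum1_card.
by apply: eq_bigl => a; rewrite inE.
Qed.

Lemma big_Theta_geometric (f : nat -> nat) (r C t0 : nat) :
  0 < r -> 0 < f t0 ->
  (forall t, f t <= C * r ^ t) -> (forall n, f t0 * r ^ n <= f (t0 + n)) ->
  big_Theta (fun t => INR (f t)) (fun t => INR r ^ t)%R.
Proof.
move=> r_gt0 ft0_gt0 f_le f_ge.
have r_pos : (0 < INR r)%R by apply: lt_0_INR; apply/ltP.
have INR_le m n : m <= n -> (INR m <= INR n)%R by move/leP; exact: le_INR.
exists (INR (f t0) / INR r ^ t0)%R, (INR C + 1)%R, t0; split; [|split].
- by apply: Rdiv_lt_0_compat; [apply: lt_0_INR; apply/ltP | exact: pow_lt].
- by have := pos_INR C; lra.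
move=> t /subnKC <-; move: (t - t0) => n; split.
- apply: Rle_trans (INR_le _ _ (f_ge n)); rewrite mult_INR pow_INR pow_add.
  have rt0_pos := pow_lt _ t0 r_pos.
  by apply: Req_le; field; lra.
- have := INR_le _ _ (f_le (t0 + n)); rewrite mult_INR pow_INR.
  have := pow_lt _ (t0 + n) r_pos; have := pos_INR C; nra.
Qed.

Definition growth (k : nat) : nat := (k - 1) ^ 3 + 3 * (k - 1).

Lemma growthE k : growth k = (k - 1) * (k - 1) * (k - 1) + 3 * (k - 1).
Proof. rewrite /growth /= Nat.mul_1_r; lia. Qed.

Lemma growth_gt0 k : 1 < k -> 0 < growth k.
Proof. by rewrite growthE; nia. Qed.

Notation walk_tuple T := (T * {set T} * T * {set T} * T * {set T})%type.

Definition closed_walk (T : finType) (E : {set {set T}}) (p : walk_tuple T) : bool :=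
  let: (u, e1, v, e2, w, e3) := p in
  [&& u != v, v != w, w != u, e1 \in E, e2 \in E, e3 \in E,
      (u \in e1) && (v \in e1), (v \in e2) && (w \in e2) & (w \in e3) && (u \in e3)].

Definition distinct_edges (T : finType) (p : walk_tuple T) : bool :=
  let: (_, e1, _, e2, _, e3) := p in [&& e1 != e2, e2 != e3 & e3 != e1].

Section Lift.
Variable T : finType.

Definition clone_choices (e : {set T}) : {set option T} := None |: [set Some x | x in e].

Definition lift_edge (e : {set T}) (c : option T) : {set T * bool} :=
  [set (y, c == Some y) | y in e].

Lemma mem_clone_choices_Some (e : {set T}) x : (Some x \in clone_choices e) = (x \in e).
Proof. by rewrite !inE mem_imset //; apply: Some_inj. Qed.

Lemma card_clone_choices (e : {set T}) : #|clone_choices e| = #|e|.+1.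
Proof.
rewrite cardsU1 card_imset; last exact: Some_inj.
by have -> : None \notin [set Some x | x in e] by apply/imsetP => -[].
Qed.

Lemma mem_lift_edge e c y b : ((y, b) \in lift_edge e c) = (y \in e) && (b == (c == Some y)).
Proof. by apply/imsetP/andP => [[z ze [-> ->]] // | [ye /eqP->]]; exists y. Qed.

Lemma lift_edge_fst e c : [set z.1 | z in lift_edge e c] = e.
Proof. by rewrite -imset_comp imset_id. Qed.

Lemma mem_lift_edge_fst e c z : z \in lift_edge e c -> z.1 \in e.
Proof. by move=> ze; rewrite -(lift_edge_fst e c); apply: imset_f. Qed.

Lemma card_lift_edge e c : #|lift_edge e c| = #|e|.
Proof. by rewrite card_imset // => y z [->]. Qed.

Lemma lift_edge_fst_inj e c : {in lift_edge e c &, injective fst}.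
Proof.
by move=> [y b] [z b'] /[!mem_lift_edge] /andP[_ /eqP->] /andP[_ /eqP->] /= ->.
Qed.

Lemma lift_edge_inj e : {in clone_choices e &, injective (lift_edge e)}.
Proof.
have clone_eq c c' x : lift_edge e c = lift_edge e c' -> c = Some x -> x \in e -> c' = Some x.
  move=> eq_lift cx xe; apply/eqP.
  have : (x, true) \in lift_edge e c by rewrite mem_lift_edge cx xe eqxx.
  by rewrite eq_lift mem_lift_edge => /andP[_ /eqP <-].
move=> [x|] c' xe c'e eq_lift.
  by rewrite (clone_eq _ _ x eq_lift) // -mem_clone_choices_Some.
case: c' c'e eq_lift => [x'|] // x'e eq_lift.
by rewrite (clone_eq _ _ x' (esym eq_lift)) // -mem_clone_choices_Some.
Qed.

Lemma lift_edge_clone (e : {set T}) x : x \in e ->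
  lift_edge e (Some x) = [set (y, false) | y in e :\ x] :|: [set (x, true)].
Proof.
move=> xe; apply/setP => -[y b].
rewrite mem_lift_edge in_setU in_set1 xpair_eqE (inj_eq Some_inj) [x == y]eq_sym.
case: b.
- have -> : (y, true) \in [set (z, false) | z in e :\ x] = false by apply/imsetP => -[].
  by case: (y =P x) => [->|]; rewrite ?xe ?andbF.
- rewrite mem_imset; last by move=> z z' [].
  by rewrite !inE; case: (y =P x) => [->|_] /=; rewrite ?andbF ?andbT ?orbF.
Qed.

Lemma ilth_edgesE (E : {set {set T}}) :
  ilth_edges E = [set lift_edge e c | e in E, c in clone_choices e].
Proof.
apply/setP => f; rewrite inE; apply/orP/imset2P.
- case=> [/imsetP[e eE ->] | /imset2P[e x eE xe ->]].
  + by exists e None; rewrite ?inE.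
  + by exists e (Some x); rewrite ?mem_clone_choices_Some ?lift_edge_clone.
- case=> e [x|] eE; rewrite ?mem_clone_choices_Some => xe ->.
  + by right; rewrite lift_edge_clone //; apply: imset2_f.
  + by left; apply: imset_f.
Qed.

Definition walk_shadow (p : walk_tuple (T * bool)%type) : walk_tuple T :=
  let: (u, f1, v, f2, w, f3) := p in
  (u.1, [set z.1 | z in f1], v.1, [set z.1 | z in f2], w.1, [set z.1 | z in f3]).

Lemma closed_walk_shadow E p : closed_walk (ilth_edges E) p -> closed_walk E (walk_shadow p).
Proof.
case: p => [[[[[[u bu] f1] [v bv]] f2] [w bw]] f3] /=; rewrite ilth_edgesE.
case/and5P=> uv vw wu /imset2P[e1 c1 e1E _ ->] /and5P[/imset2P[e2 c2 e2E _ ->]].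
case/imset2P=> e3 c3 e3E _ -> /andP[ue1 ve1] /andP[ve2 we2] /andP[we3 ue3].
have fst_eq e c := inj_in_eq (@lift_edge_fst_inj e c).
rewrite !lift_edge_fst e1E e2E e3E.
rewrite (fst_eq _ _ _ _ ue1 ve1) (fst_eq _ _ _ _ ve2 we2) (fst_eq _ _ _ _ we3 ue3) uv vw wu.
by rewrite !(mem_lift_edge_fst ue1, mem_lift_edge_fst ve1, mem_lift_edge_fst ve2,
             mem_lift_edge_fst we2, mem_lift_edge_fst we3, mem_lift_edge_fst ue3).
Qed.

Lemma distinct_edges_shadow p : distinct_edges (walk_shadow p) -> distinct_edges p.
Proof.
case: p => [[[[[u f1] v] f2] w] f3] /= /and3P[d12 d23 d31].
by apply/and3P; split; [move: d12 | move: d23 | move: d31]; apply: contra => /eqP->.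
Qed.

Definition other_choices (e : {set T}) (a b : T) := clone_choices e :\ Some a :\ Some b.

Lemma card_other_choices (e : {set T}) a b : a \in e -> b \in e -> a != b ->
  #|other_choices e a b| = #|e| - 1.
Proof.
move=> ae be ab; have := card_clone_choices e.
rewrite (cardsD1 (Some a)) (cardsD1 (Some b) (clone_choices e :\ Some a)).
rewrite in_setD1 (inj_eq Some_inj) eq_sym (negbTE ab) !mem_clone_choices_Some ae be.
by rewrite /other_choices /= !add1n => -[<-]; rewrite subn1.
Qed.

Variant choice_spec (e : {set T}) (a b : T) (c : option T) :
    bool -> bool -> bool -> bool -> Set :=
  | ChoiceCloneFirst : choice_spec e a b c true true false false
  | ChoiceCloneSecond : choice_spec e a b c true false true false
  | ChoiceOther : choice_spec e a b c true false false true
  | ChoiceInvalid : choice_spec e a b c false false false false.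

Lemma choiceP (e : {set T}) a b c : a \in e -> b \in e -> a != b ->
  choice_spec e a b c (c \in clone_choices e) (c == Some a) (c == Some b)
                      (c \in other_choices e a b).
Proof.
move=> ae be ab; rewrite /other_choices !in_setD1.
have [->|_] := eqVneq c (Some a).
  by rewrite mem_clone_choices_Some ae (inj_eq Some_inj) (negbTE ab); constructor.
have [->|_] := eqVneq c (Some b); last by case: (c \in clone_choices e); constructor.
by rewrite mem_clone_choices_Some be; constructor.
Qed.

Section Choices.
Variables (u v w : T) (e1 e2 e3 : {set T}).
Hypotheses (uv : u != v) (vw : v != w) (wu : w != u).
Hypotheses (ue1 : u \in e1) (ve1 : v \in e1) (ve2 : v \in e2) (we2 : w \in e2)
           (we3 : w \in e3) (ue3 : u \in e3).

(* [(u, b)] lies in both lifted edges through [u] iff [b = (c1 == Some u) = (c3 == Some u)];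
   likewise for [v] and [w]. *)
Definition compatible_choices : {set option T * option T * option T} :=
  [set c | let: (c1, c2, c3) := c in
     [&& c1 \in clone_choices e1, c2 \in clone_choices e2, c3 \in clone_choices e3,
         (c1 == Some u) == (c3 == Some u), (c1 == Some v) == (c2 == Some v)
       & (c2 == Some w) == (c3 == Some w)]].

Lemma mem_compatible_choices c1 c2 c3 :
  ((c1, c2, c3) \in compatible_choices) =
  [&& c1 \in clone_choices e1, c2 \in clone_choices e2, c3 \in clone_choices e3,
      (c1 == Some u) == (c3 == Some u), (c1 == Some v) == (c2 == Some v)
    & (c2 == Some w) == (c3 == Some w)].
Proof. by rewrite in_set. Qed.

(* At most one of [u], [v], [w] is cloned: two of them share an edge, which clones
   at most one vertex. *)
Let no_clone := setX (setX (other_choices e1 u v) (other_choices e2 v w)) (other_choices e3 w u).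
Let clone_u := setX (setX [set Some u] (other_choices e2 v w)) [set Some u].
Let clone_v := setX (setX [set Some v] [set Some v]) (other_choices e3 w u).
Let clone_w := setX (setX (other_choices e1 u v) [set Some w]) [set Some w].

(* Read in [nat], this says that the four pieces partition [compatible_choices]. *)
Lemma compatible_choices_split c :
  c \in compatible_choices =
  (c \in no_clone) + (c \in clone_u) + (c \in clone_v) + (c \in clone_w) :> nat.
Proof.
case: c => [[c1 c2] c3]; rewrite mem_compatible_choices !in_setX !in_set1 /=.
case: (choiceP c1 ue1 ve1 uv); case: (choiceP c2 ve2 we2 vw);
  by case: (choiceP c3 we3 ue3 wu).
Qed.

Lemma card_compatible_choices k : #|e1| = k -> #|e2| = k -> #|e3| = k ->
  #|compatible_choices| = growth k.
Proof.
move=> k1 k2 k3.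
rewrite card_sum_indicator (eq_bigr _ (fun c _ => compatible_choices_split c)).
rewrite !big_split /= -!card_sum_indicator /no_clone /clone_u /clone_v /clone_w.
by rewrite !cardsX !cards1 !card_other_choices // k1 k2 k3 growthE; lia.
Qed.

End Choices.

Section Fiber.
Variables (E : {set {set T}}) (u v w : T) (e1 e2 e3 : {set T}).
Hypothesis walk_uvw : closed_walk E (u, e1, v, e2, w, e3).

Definition lift_walk (c : option T * option T * option T) : walk_tuple (T * bool)%type :=
  let: (c1, c2, c3) := c in
  ((u, c1 == Some u), lift_edge e1 c1, (v, c1 == Some v), lift_edge e2 c2,
   (w, c2 == Some w), lift_edge e3 c3).

Lemma lift_walk_inj : {in compatible_choices u v w e1 e2 e3 &, injective lift_walk}.
Proof.
move=> [[c1 c2] c3] [[d1 d2] d3] /[!mem_compatible_choices].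
move=> /and4P[c1e c2e c3e _] /and4P[d1e d2e d3e _] [_ eq1 _ eq2 _ eq3].
by rewrite (lift_edge_inj c1e d1e eq1) (lift_edge_inj c2e d2e eq2) (lift_edge_inj c3e d3e eq3).
Qed.

Lemma walk_fiberE :
  [set p | closed_walk (ilth_edges E) p & walk_shadow p == (u, e1, v, e2, w, e3)]
  = lift_walk @: compatible_choices u v w e1 e2 e3.
Proof.
move: walk_uvw => /and5P[uv vw wu e1E /and5P[e2E e3E /andP[ue1 ve1] /andP[ve2 we2] /andP[we3 ue3]]].
apply/setP => p; rewrite inE; apply/andP/imsetP.
- case: p => [[[[[[u' bu] f1] [v' bv]] f2] [w' bw]] f3] /=; rewrite ilth_edgesE.
  case=> /and5P[_ _ _ /imset2P[g1 c1 _ c1g ->] /and5P[/imset2P[g2 c2 _ c2g ->]]].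
  case/imset2P=> g3 c3 _ c3g -> /andP[ug1 vg1] /andP[vg2 wg2] /andP[wg3 ug3].
  rewrite !lift_edge_fst => /eqP[? ? ? ? ? ?]; subst u' g1 v' g2 w' g3.
  move: ug1 vg1 vg2 wg2 wg3 ug3; rewrite !mem_lift_edge ue1 ve1 ve2 we2 we3 ue3 /=.
  move=> /eqP bu1 /eqP bv1 /eqP bv2 /eqP bw2 /eqP bw3 /eqP bu3.
  exists (c1, c2, c3); last by rewrite /= -bu1 -bv1 -bw2.
  by rewrite mem_compatible_choices c1g c2g c3g -bu1 -bu3 -bv1 -bv2 -bw2 -bw3 !eqxx.
- case=> -[[c1 c2] c3] /[!mem_compatible_choices].
  case/and5P=> c1e c2e c3e /eqP bu /andP[/eqP bv /eqP bw] ->.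
  rewrite /= !lift_edge_fst eqxx ilth_edgesE !imset2_f // !mem_lift_edge ue1 ve1 ve2 we2 we3 ue3.
  by rewrite bu bv bw !eqxx !xpair_eqE (negbTE uv) (negbTE vw) (negbTE wu).
Qed.

Lemma card_walk_fiber k : {in E, forall e : {set T}, #|e| = k} ->
  #|[set p | closed_walk (ilth_edges E) p & walk_shadow p == (u, e1, v, e2, w, e3)]| = growth k.
Proof.
move: walk_uvw => /and5P[uv vw wu e1E /and5P[e2E e3E /andP[ue1 ve1] /andP[ve2 we2] /andP[we3 ue3]]].
move=> Ek; rewrite walk_fiberE card_in_imset; last exact: lift_walk_inj.
by apply: card_compatible_choices; rewrite ?Ek.
Qed.

End Fiber.
End Lift.

Definition closed_walks (H : hgraph) : {set walk_tuple (hvert H)} :=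
  [set p | closed_walk (hedges H) p].

Definition hypertriangles (H : hgraph) : {set walk_tuple (hvert H)} :=
  [set p | closed_walk (hedges H) p && distinct_edges p].

Lemma num_hypertrianglesE H : num_hypertriangles H = #|hypertriangles H|.
Proof.
apply: eq_card => -[[[[[u e1] v] e2] w] e3]; rewrite !inE /is_hypertriangle /=.
apply/idP/idP.
- case/and5P=> uv vw wu e1E /and5P[e2E e3E d12 d23 /and5P[d31 m1 m2 w3 u3]].
  by rewrite uv vw wu e1E e2E e3E d12 d23 d31 m1 m2 w3 u3.
- case/andP=> /and5P[uv vw wu e1E /and5P[e2E e3E m1 m2 /andP[w3 u3]]] /and3P[d12 d23 d31].
  by rewrite uv vw wu e1E e2E e3E d12 d23 d31 m1 m2 w3 u3.
Qed.

Lemma hypertriangles_subset H : hypertriangles H \subset closed_walks H.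
Proof. by apply/subsetP => p; rewrite !inE => /andP[]. Qed.

Lemma uniform_ilth_step k H : uniform k H -> uniform k (ilth_step H).
Proof.
by move=> Hk f /=; rewrite ilth_edgesE => /imset2P[e c /Hk <- _ ->]; exact: card_lift_edge.
Qed.

Lemma uniform_ilth k H0 t : uniform k H0 -> uniform k (ilth H0 t).
Proof. by move=> H0k; elim: t => //= t; exact: uniform_ilth_step. Qed.

Lemma card_closed_walks_ilth_step k H : uniform k H ->
  #|closed_walks (ilth_step H)| = #|closed_walks H| * growth k.
Proof.
move=> Hk; apply: (card_uniform_fibers (f := @walk_shadow _)) => [p | [[[[[u e1] v] e2] w] e3]].
  by rewrite !inE; exact: closed_walk_shadow.
rewrite inE => walk_p; rewrite -(card_walk_fiber walk_p Hk).
by apply: eq_card => p; rewrite !inE.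
Qed.

Lemma card_hypertriangles_ilth_step k H : uniform k H ->
  #|hypertriangles H| * growth k <= #|hypertriangles (ilth_step H)|.
Proof.
move=> Hk; set A := [set p in closed_walks (ilth_step H) | walk_shadow p \in hypertriangles H].
have <- : #|A| = #|hypertriangles H| * growth k.
  apply: (card_uniform_fibers (f := @walk_shadow _)) => [p | [[[[[u e1] v] e2] w] e3]].
    by rewrite inE => /andP[].
  rewrite inE => /andP[walk_p distinct_p]; rewrite -(card_walk_fiber walk_p Hk).
  apply: eq_card => p; rewrite !inE.
  by case: eqP => [->|]; rewrite ?walk_p ?distinct_p ?andbT ?andbF.
apply/subset_leq_card/subsetP => p; rewrite !inE => /andP[-> /andP[_]].
exact: distinct_edges_shadow.
Qed.

Lemma card_closed_walks_ilth k H0 t : uniform k H0 ->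
  #|closed_walks (ilth H0 t)| = #|closed_walks H0| * growth k ^ t.
Proof.
move=> H0k; elim: t => [|t IH] /=; first by rewrite muln1.
rewrite (card_closed_walks_ilth_step (uniform_ilth H0k)) IH.
by rewrite multE [growth k * _]mulnC mulnA.
Qed.

Lemma card_hypertriangles_ilth k H0 t n : uniform k H0 ->
  #|hypertriangles (ilth H0 t)| * growth k ^ n <= #|hypertriangles (ilth H0 (t + n))|.
Proof.
move=> H0k; elim: n => [|n IH]; first by rewrite muln1 addn0.
rewrite addnS /=; apply: leq_trans (card_hypertriangles_ilth_step (uniform_ilth H0k)).
by rewrite multE mulnCA mulnC leq_mul2r IH orbT.
Qed.

Theorem lemma4p6 (k : nat) (H0 : hgraph) :
  (2 <= k)%nat ->
  uniform k H0 ->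
  (exists t0 : nat, (0 < num_hypertriangles (ilth H0 t0))%nat) ->
  big_Theta (fun t => INR (num_hypertriangles (ilth H0 t)))
            (fun t => (INR ((k - 1) ^ 3 + 3 * (k - 1)) ^ t)%R).
Proof.
move=> k_ge2 H0k [t0 tri_t0].
apply: (big_Theta_geometric (r := growth k) (C := #|closed_walks H0|) (t0 := t0)).
- exact: growth_gt0.
- exact: tri_t0.
- move=> t; rewrite num_hypertrianglesE -(card_closed_walks_ilth t H0k).
  exact/subset_leq_card/hypertriangles_subset.
- by move=> n; rewrite !num_hypertrianglesE card_hypertriangles_ilth.
Qed.
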